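(* Let $(S,K,I)$ be a split graph. If $A_4(S)$ is connected, then $\Phi(S)$ is connected.
   Context: All graphs are finite and simple. A split graph is a graph $S$ whose vertex set is a disjoint union $V(S)=K\,\dot\cup\,I$ with $K$ a clique and $I$ an independent set; $(K,I)$ is called a bipartition of $S$, and $(S,K,I)$ denotes $S$ together with this fixed bipartition. A 2-switch in a graph $G$ is performed on four distinct vertices $a,b,c,d$ with $ab,cd\in E(G)$ and $ac,bd\notin E(G)$: it deletes $ab,cd$ and adds $ac,bd$; $a,b,c,d$ are said to participate in it. $A_4(G)$ is the graph with vertex set $V(G)$ in which distinct $u,v$ are adjacent iff some 2-switch on $G$ has both $u$ and $v$ among its participating vertices. For a split graph $(S,K,I)$ and distinct $u,v\in I$, $\sigma_{uv}(S)$ is the number of induced subgraphs of $S$ isomorphic to $P_4$ containing both $u$ and $v$. The factor graph $\Phi(S)$ is the loopless multigraph with vertex set $I$ having exactly $\sigma_{uv}(S)$ parallel edges between $u$ and $v$. Graph notions (connected, complete, clique, etc.) applied to $\Phi(S)$ refer to its underlying simple graph, in which $u\sim v$ iff $\sigma_{uv}(S)\ge1$. *)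

From mathcomp Require Import all_boot.
Set Implicit Arguments. Unset Strict Implicit. Unset Printing Implicit Defensive.

Definition simple_graph (T : finType) (e : rel T) : Prop :=
  irreflexive e /\ symmetric e.

Definition split_bipartition (T : finType) (e : rel T) (K I : {set T}) : Prop :=
  [/\ K :|: I = [set: T], [disjoint K & I],
      (forall x y, x \in K -> y \in K -> x != y -> e x y)
    & (forall x y, x \in I -> y \in I -> ~~ e x y)].

Definition two_switch (T : finType) (e : rel T) (a b c d : T) : bool :=
  [&& uniq [:: a; b; c; d], e a b, e c d, ~~ e a c & ~~ e b d].

Definition A4_adj (T : finType) (e : rel T) : rel T := fun u v =>
  (u != v) && [exists a, exists b, exists c, exists d,
     [&& two_switch e a b c d, u \in [set a; b; c; d] & v \in [set a; b; c; d]]].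

Definition induces_P4 (T : finType) (e : rel T) (X : {set T}) : bool :=
  [exists a, exists b, exists c, exists d,
    [&& uniq [:: a; b; c; d], X == [set a; b; c; d],
        e a b, e b c, e c d, ~~ e a c, ~~ e a d & ~~ e b d]].

Definition sigma (T : finType) (e : rel T) (u v : T) : nat :=
  #|[set X : {set T} | [&& induces_P4 e X, u \in X & v \in X]]|.

(* Underlying simple graph of the factor graph Phi(S), on vertex set I. *)
Definition Phi_adj (T : finType) (e : rel T) (I : {set T}) : rel T := fun u v =>
  [&& u \in I, v \in I, u != v & 0 < sigma e u v].

(* A graph with vertex set V and adjacency r (r only relating vertices of V)
   is connected if any two vertices of V are joined by a path. *)
Definition connected_on (T : finType) (V : {set T}) (r : rel T) : Prop :=
  forall u v, u \in V -> v \in V -> connect r u v.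

From mathcomp Require Import all_boot.
Set Implicit Arguments.
Unset Strict Implicit.
Unset Printing Implicit Defensive.

(* In a split graph every 2-switch is, up to relabelling, an induced path
   p - q - r - s with p, s in I and q, r in K, so p and s are adjacent in
   Phi(S).  Two such paths sharing a vertex have Phi-connected ends: for a
   shared vertex of I this is clear, and for a shared vertex k of K one finds
   a third such path linking an end of the first to an end of the second.
   Walking along a path of A_4(S) between two vertices of I, the ends of the
   successive 2-switches therefore stay in one component of Phi(S). *)

Section SplitGraph.
Variables (T : finType) (e : rel T) (K I : {set T}).
Hypotheses (e_sym : symmetric e) (KUI : K :|: I = [set: T])
  (disjKI : [disjoint K & I])
  (K_clique : forall x y, x \in K -> y \in K -> x != y -> e x y)
  (I_indep : forall x y, x \in I -> y \in I -> ~~ e x y).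

Local Notation Phi := (Phi_adj e I).

Lemma in_KorI x : (x \in K) || (x \in I).
Proof. by rewrite -in_setU KUI inE. Qed.

Lemma in_K_notin_I x : x \in K -> x \notin I.
Proof. by move=> xK; rewrite (disjointFr disjKI xK). Qed.

Lemma neq_IK x y : x \in I -> y \in K -> x != y.
Proof. by move=> xI yK; apply: contraTneq xI => ->; exact: in_K_notin_I. Qed.

Lemma adj_I_in_K x y : x \in I -> e x y -> y \in K.
Proof.
move=> xI xy; case/orP: (in_KorI y) => // yI.
by have := I_indep xI yI; rewrite xy.
Qed.

Lemma nonadj_K_in_I x y : x \in K -> x != y -> ~~ e x y -> y \in I.
Proof.
move=> xK xy nxy; case/orP: (in_KorI y) => // yK.
by have := K_clique xK yK xy; rewrite (negbTE nxy).
Qed.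

Lemma connect_Phi_sym : connect_sym Phi.
Proof.
apply: sym_connect_sym => x y; rewrite /Phi_adj andbCA (eq_sym x).
suff -> : sigma e x y = sigma e y x by [].
by apply: eq_card => X; rewrite !inE [(x \in X) && _]andbC.
Qed.

(* The edge q r and the non-edge p s of the induced path p - q - r - s
   come for free from the bipartition. *)
Definition split_P4 (p q r s : T) : bool :=
  [&& p \in I, s \in I, q \in K, r \in K, p != s,
      q != r, e p q, e r s, ~~ e p r & ~~ e q s].

Lemma split_P4_rev p q r s : split_P4 p q r s -> split_P4 s r q p.
Proof.
case/and5P => pI sI qK rK /and5P[ps qr pq rs /andP[pr qs]].
by rewrite /split_P4 sI pI rK qK eq_sym ps eq_sym qr e_sym rs e_sym pq
  e_sym qs e_sym pr.
Qed.

Lemma split_P4_Phi p q r s : split_P4 p q r s -> Phi p s.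
Proof.
case/and5P => pI sI qK rK /and5P[ps qr pq rs /andP[pr qs]].
rewrite /Phi_adj pI sI ps; apply/card_gt0P; exists [set p; q; r; s].
rewrite !inE !eqxx /= !orbT andbT.
apply/existsP; exists p; apply/existsP; exists q;
  apply/existsP; exists r; apply/existsP; exists s.
rewrite eqxx pq rs pr qs (K_clique qK rK qr) (I_indep pI sI) /= !inE !negb_or.
by rewrite ps qr (neq_IK pI qK) (neq_IK pI rK) ![_ == s]eq_sym (neq_IK sI qK) (neq_IK sI rK).
Qed.

Lemma connect_split_P4_end p q r s a :
  split_P4 p q r s -> a = p \/ a = s -> connect Phi p a.
Proof. by move=> P [] ->; [exact: connect0 | exact: connect1 (split_P4_Phi P)]. Qed.

Lemma two_switch_split_P4 a b c d :
  two_switch e a b c d -> split_P4 a b c d \/ split_P4 b a d c.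
Proof.
case/and5P => + ab cd ac bd.
rewrite /= !inE !negb_or !andbT => /and3P[/and3P[nab nac nad] /andP[nbc nbd] _].
have [aI | aNI] := boolP (a \in I).
  have bK := adj_I_in_K aI ab; have dI := nonadj_K_in_I bK nbd bd.
  have cK : c \in K by apply: (adj_I_in_K dI); rewrite e_sym.
  by left; rewrite /split_P4 aI dI bK cK nad nbc ab cd ac bd.
have aK : a \in K by move: (in_KorI a); rewrite (negbTE aNI) orbF.
have cI := nonadj_K_in_I aK nac ac; have dK := adj_I_in_K cI cd.
have bI : b \in I by apply: (nonadj_K_in_I dK); rewrite 1?eq_sym // e_sym.
by right; rewrite /split_P4 bI cI aK dK nbc nad e_sym ab e_sym cd bd ac.
Qed.

Lemma A4_adj_split_P4 x y : A4_adj e x y ->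
  exists p q r s, [/\ split_P4 p q r s, x \in [set p; q; r; s]
                    & y \in [set p; q; r; s]].
Proof.
case/andP=> _ /existsP[a /existsP[b /existsP[c /existsP[d /and3P[sw xP yP]]]]].
case: (two_switch_split_P4 sw) => P; first by exists a, b, c, d.
have abcd : [set a; b; c; d] = [set b; a; d; c].
  by apply/setP => z; rewrite !inE orbAC [(z == a) || _]orbC -!orbA orbCA.
by exists b, a, d, c; rewrite -abcd.
Qed.

Lemma split_P4_mem_I p q r s z : split_P4 p q r s ->
  z \in [set p; q; r; s] -> z \in I -> z = p \/ z = s.
Proof.
case/and5P=> _ _ qK rK _; rewrite !inE -!orbA => /or4P[]/eqP-> zI.
- by left.
- by rewrite (negbTE (in_K_notin_I qK)) in zI.
- by rewrite (negbTE (in_K_notin_I rK)) in zI.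
- by right.
Qed.

Lemma split_P4_mem p q r s z : split_P4 p q r s -> z \in [set p; q; r; s] ->
  exists a b c d, [/\ split_P4 a b c d, a = p \/ a = s & z = a \/ z = b].
Proof.
move=> P; have Pr := split_P4_rev P.
rewrite !inE -!orbA => /or4P[]/eqP->.
- by exists p, q, r, s; split=> //; left.
- by exists p, q, r, s; split=> //; [left | right].
- by exists s, r, q, p; split=> //; right.
- by exists s, r, q, p; split=> //; [right | left].
Qed.

Lemma connect_split_P4_common_K a k c d a' c' d' :
  split_P4 a k c d -> split_P4 a' k c' d' -> connect Phi a a'.
Proof.
move=> P P'; move: (P) (P').
case/and5P=> aI dI kK cK /and5P[ad kc ak cd /andP[ac kd]].
case/and5P=> a'I d'I _ c'K /and5P[a'd' kc' a'k c'd' /andP[a'c' kd']].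
have [<- | aa'] := eqVneq a a'; first exact: connect0.
have [a'c | a'Nc] := boolP (e a' c); last first.
  have a'd : a' != d by apply: contraNneq kd => <-; rewrite e_sym.
  have Q : split_P4 a' k c d by rewrite /split_P4 a'I dI kK cK kc a'k cd a'Nc kd a'd.
  exact: connect_trans (connect1 (split_P4_Phi P))
                       (connect1 (split_P4_Phi (split_P4_rev Q))).
have cc' : c != c' by apply: contraNneq a'c' => <-.
have [ac' | aNc'] := boolP (e a c').
  apply/connect1/(@split_P4_Phi a c' c a').
  by rewrite /split_P4 aI a'I c'K cK aa' eq_sym cc' ac' e_sym a'c ac e_sym a'c'.
have ad' : a != d' by apply: contraNneq kd' => <-; rewrite e_sym.
have Q : split_P4 a k c' d' by rewrite /split_P4 aI d'I kK c'K kc' ak c'd' aNc' kd' ad'.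
exact: connect_trans (connect1 (split_P4_Phi Q))
                     (connect1 (split_P4_Phi (split_P4_rev P'))).
Qed.

Lemma connect_split_P4_common p q r s p' q' r' s' z :
  split_P4 p q r s -> split_P4 p' q' r' s' ->
  z \in [set p; q; r; s] -> z \in [set p'; q'; r'; s'] -> connect Phi p p'.
Proof.
move=> P P' /(split_P4_mem P)[a [b [c [d [Q ends zQ]]]]].
move=> /(split_P4_mem P')[a' [b' [c' [d' [Q' ends' zQ']]]]].
apply: connect_trans (connect_split_P4_end P ends) _.
rewrite connect_Phi_sym; apply: connect_trans (connect_split_P4_end P' ends') _.
rewrite connect_Phi_sym; move: (Q) (Q') => /and5P[aI _ bK _ _] /and5P[a'I _ b'K _ _].
case: zQ zQ' => [] -> [] E.
- by rewrite E; exact: connect0.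
- by rewrite -E in b'K; rewrite (negbTE (in_K_notin_I b'K)) in aI.
- by rewrite -E in a'I; rewrite (negbTE (in_K_notin_I bK)) in a'I.
- by rewrite -E in Q'; exact: connect_split_P4_common_K Q Q'.
Qed.

Definition tied (u x : T) : Prop :=
  exists p q r s, [/\ split_P4 p q r s, x \in [set p; q; r; s] & connect Phi u p].

Lemma tied_A4_adj u x y : tied u x -> A4_adj e x y -> tied u y.
Proof.
case=> [p [q [r [s [P xP up]]]]] /A4_adj_split_P4[p' [q' [r' [s' [P' xP' yP']]]]].
exists p', q', r', s'; split=> //.
exact: connect_trans up (connect_split_P4_common P P' xP xP').
Qed.

Lemma tied_A4_adj_I u y : u \in I -> A4_adj e u y -> tied u y.
Proof.
move=> uI /A4_adj_split_P4[p [q [r [s [P uP yP]]]]].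
exists p, q, r, s; split=> //; rewrite connect_Phi_sym.
exact: connect_split_P4_end P (split_P4_mem_I P uP uI).
Qed.

Lemma tied_path u x path_x : path (A4_adj e) x path_x ->
  tied u x -> tied u (last x path_x).
Proof.
elim: path_x x => [|y path_x IH] x //= /andP[xy yp] ux.
exact: IH yp (tied_A4_adj ux xy).
Qed.

Lemma connect_Phi_tied u v : v \in I -> tied u v -> connect Phi u v.
Proof.
move=> vI [p [q [r [s [P vP up]]]]].
exact: connect_trans up (connect_split_P4_end P (split_P4_mem_I P vP vI)).
Qed.

Lemma connect_A4_adj_Phi u v : u \in I -> v \in I ->
  connect (A4_adj e) u v -> connect Phi u v.
Proof.
move=> uI vI /connectP[[|y path_y] /= uy v_last]; first by rewrite v_last.
case/andP: uy => uy yp; rewrite v_last in vI *.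
exact: connect_Phi_tied vI (tied_path yp (tied_A4_adj_I uI uy)).
Qed.

End SplitGraph.

Theorem theorem2p4 (T : finType) (e : rel T) (K I : {set T}) :
  simple_graph e -> split_bipartition e K I ->
  connected_on [set: T] (A4_adj e) ->
  connected_on I (Phi_adj e I).
Proof.
move=> [_ e_sym] [KUI disjKI K_clique I_indep] A4_conn u v uI vI.
apply: (connect_A4_adj_Phi e_sym KUI disjKI K_clique I_indep uI vI).
exact: A4_conn.
Qed.
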